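(* Let $r\ge 2$, $d\ge 1$. Let $\Delta\subset\mathbb{R}^d$ be a regular simplex with vertices $v_1,\ldots,v_{d+1}$ and centre $c$, and let $B$ be the closed Euclidean unit ball centred at the origin. Then for all sufficiently small $\varepsilon>0$ the following holds. For each $h\in[d+1]$ let $U_h\subset v_h+\varepsilon B$ be a set of $r-1$ points, and let $A=\{c\}\cup\bigcup_{h=1}^{d+1}U_h$ (so $|A|=(r-1)(d+1)+1$), where the points are chosen so that the coordinates of the points of $A$ are algebraically independent. Then there is no proper partition $\{A_1,\ldots,A_r\}$ of $A$ for which the solution $(z,\alpha)$ of \[ z=\sum_{x\in A_j}\alpha(x)\,x \quad\text{and}\quad 1=\sum_{x\in A_j}\alpha(x)\qquad\text{for all } j\in[r] \] satisfies $\alpha(c)<0$ and $\alpha(x)>0$ for all $x\in A\setminus\{c\}$.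
   Context: A partition $\{A_1,\ldots,A_r\}$ of $A$ into $r$ parts is called proper if $1\le |A_j|\le d+1$ for every $j$. Note that here $M=\{c\}$ does not satisfy $\operatorname{conv}M\cap\operatorname{conv}(A\setminus M)=\emptyset$. *)

From HB Require Import structures.
From mathcomp Require Import all_boot all_order all_algebra.
Set Implicit Arguments. Unset Strict Implicit. Unset Printing Implicit Defensive.
Import Order.TTheory GRing.Theory Num.Theory.
Local Open Scope ring_scope.

Definition sqdist (R : realFieldType) (d : nat) (x y : 'rV[R]_d) : R :=
  \sum_(i < d) (x 0 i - y 0 i) ^+ 2.

Definition regular_simplex (R : realFieldType) (d : nat) (v : 'I_d.+1 -> 'rV[R]_d) : Prop :=
  exists s : R, 0 < s /\ forall i j : 'I_d.+1, i != j -> sqdist (v i) (v j) = s.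

Definition simplex_centre (R : realFieldType) (d : nat) (v : 'I_d.+1 -> 'rV[R]_d) : 'rV[R]_d :=
  (d.+1%:R)^-1 *: \sum_(h < d.+1) v h.

(* Algebraic independence over Q of a finite family of numbers x : V -> R:
   no nonzero polynomial with integer (equivalently rational) coefficients
   vanishes at x.  A polynomial in the variables V with degree < D in each
   variable is given by its coefficient function on exponent vectors. *)
Definition alg_indep (R : realFieldType) (V : finType) (x : V -> R) : Prop :=
  forall (D : nat) (f : {ffun {ffun V -> 'I_D} -> int}),
    (exists e, f e != 0) ->
    \sum_(e : {ffun V -> 'I_D}) (f e)%:~R * \prod_(w : V) x w ^+ (e w) != 0.

(* labels of the points of A : None is c, Some (h,k) is the k-th point of U_h *)
Definition Alabel (d r : nat) : finType := option ('I_d.+1 * 'I_r.-1).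

Definition Apoint (R : realFieldType) (d r : nat) (c : 'rV[R]_d)
  (U : 'I_d.+1 -> 'I_r.-1 -> 'rV[R]_d) (t : Alabel d r) : 'rV[R]_d :=
  match t with None => c | Some (h, k) => U h k end.

Definition Acoords (R : realFieldType) (d r : nat) (c : 'rV[R]_d)
  (U : 'I_d.+1 -> 'I_r.-1 -> 'rV[R]_d) (w : Alabel d r * 'I_d) : R :=
  Apoint c U w.1 0 w.2.

Definition proper_partition (d r : nat) (P : {set {set Alabel d r}}) : Prop :=
  partition P [set: Alabel d r] /\ #|P| = r /\
  forall B, B \in P -> (1 <= #|B| <= d.+1)%N.

From HB Require Import structures.
From mathcomp Require Import all_boot all_order all_algebra.
From mathcomp Require Import ring lra.
Import Order.TTheory GRing.Theory Num.Theory.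
Local Open Scope ring_scope.
Set Implicit Arguments. Unset Strict Implicit.

(* Write a_h = v_h - c.  For a regular simplex the a_h sum to 0 and pairwise
   have negative inner product, so every point near v_h (h <> h0) lies strictly
   on the negative side of the hyperplane through c orthogonal to a_h0.  Pick
   h0 with <z - c, a_h0> >= 0.  In each part, z - c is the combination of the
   x - c with weights alpha(x), negative only at c where x - c = 0; so a part
   avoiding U_h0 would give <z - c, a_h0> < 0, or, if it only contains c,
   weights summing to a negative number.  Hence each of the r disjoint parts
   meets U_h0, which has only r - 1 points. *)

Section SumSign.
Variable R : realDomainType.

Lemma sumr_lt0 (I : finType) (P : pred I) (F : I -> R) (i0 : I) :
  P i0 -> F i0 < 0 -> (forall i, P i -> F i <= 0) -> \sum_(i | P i) F i < 0.
Proof.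
move=> Pi0 Fi0 F_le0; rewrite (bigD1 i0) //=.
have : \sum_(i | P i && (i != i0)) F i <= 0.
  by apply: sumr_le0 => i /andP [Pi _]; exact: F_le0.
lra.
Qed.

Lemma sumr_eq0_exists_ge0 (I : finType) (i0 : I) (F : I -> R) :
  \sum_i F i = 0 -> exists i, 0 <= F i.
Proof.
move=> sum0; apply/existsP; apply: contraT => /existsPn F_lt0.
suff : \sum_i F i < 0 by rewrite sum0 ltxx.
apply: (sumr_lt0 (i0 := i0)) => // [|i _]; first by rewrite ltNge F_lt0.
by rewrite ltW // ltNge F_lt0.
Qed.

End SumSign.

Lemma card_trivIset_le (T I : finType) (P : {set {set T}}) (f : I -> T) :
  trivIset P -> (forall B, B \in P -> exists i, f i \in B) -> (#|P| <= #|I|)%N.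
Proof.
move=> triP meetP; case: (set_0Vmem P) => [-> | [B0 /meetP [i0 _]]].
  by rewrite cards0.
pose g (B : {set T}) := odflt i0 [pick i | f i \in B].
have gP B : B \in P -> f (g B) \in B.
  by move=> /meetP [i fiB]; rewrite /g; case: pickP => // /(_ i); rewrite fiB.
have g_inj : {in P &, injective g}.
  move=> B1 B2 PB1 PB2 eq_g.
  by rewrite -(def_pblock triP PB1 (gP _ PB1)) -(def_pblock triP PB2 (gP _ PB2)) eq_g.
by rewrite -(card_in_imset g_inj) max_card.
Qed.

Section Dot.
Variables (R : realFieldType) (d : nat).
Implicit Types (x y z w a : 'rV[R]_d).

Definition dot x y : R := \sum_(i < d) x 0 i * y 0 i.

Lemma dotC x y : dot x y = dot y x.
Proof. by apply: eq_bigr => i _; rewrite mulrC. Qed.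

Lemma dotDl x y z : dot (x + y) z = dot x z + dot y z.
Proof. by rewrite /dot -big_split; apply: eq_bigr => i _; rewrite mxE mulrDl. Qed.

Lemma dotBl x y z : dot (x - y) z = dot x z - dot y z.
Proof. by rewrite /dot -sumrB; apply: eq_bigr => i _; rewrite !mxE mulrBl. Qed.

Lemma dotBr x y z : dot z (x - y) = dot z x - dot z y.
Proof. by rewrite !(dotC z) dotBl. Qed.

Lemma dotZl (k : R) x y : dot (k *: x) y = k * dot x y.
Proof. by rewrite /dot mulr_sumr; apply: eq_bigr => i _; rewrite mxE mulrA. Qed.

Lemma dotZr (k : R) x y : dot x (k *: y) = k * dot x y.
Proof. by rewrite dotC dotZl dotC. Qed.

Lemma dot0l x : dot 0 x = 0.
Proof. by rewrite /dot big1 // => i _; rewrite mxE mul0r. Qed.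

Lemma dot0r x : dot x 0 = 0.
Proof. by rewrite dotC dot0l. Qed.

Lemma dot_suml (I : finType) (P : pred I) (f : I -> 'rV[R]_d) y :
  dot (\sum_(t | P t) f t) y = \sum_(t | P t) dot (f t) y.
Proof. by rewrite /dot exchange_big; apply: eq_bigr => i _; rewrite summxE mulr_suml. Qed.

Lemma dot_sumr (I : finType) (P : pred I) (f : I -> 'rV[R]_d) y :
  dot y (\sum_(t | P t) f t) = \sum_(t | P t) dot y (f t).
Proof. by rewrite dotC dot_suml; apply: eq_bigr => t _; rewrite dotC. Qed.

Lemma sqdistE x y : sqdist x y = dot (x - y) (x - y).
Proof. by apply: eq_bigr => i _; rewrite !mxE expr2. Qed.

Lemma dot_sqrB x y : dot (x - y) (x - y) = dot x x - 2 * dot x y + dot y y.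
Proof. by rewrite !dotBl !dotBr (dotC y x); ring. Qed.

Lemma dot_ge0 x : 0 <= dot x x.
Proof. by apply: sumr_ge0 => i _; rewrite -expr2 sqr_ge0. Qed.

Lemma dot_AMGM (k : R) w a : 2 * k * dot w a <= dot w w + k ^+ 2 * dot a a.
Proof.
have := dot_ge0 (w - k *: a).
rewrite dot_sqrB dotZl !dotZr => h.
rewrite -subr_ge0 (_ : _ - _ = dot w w - 2 * (k * dot w a) + k * (k * dot a a)) //.
by ring.
Qed.

Lemma dot_affine_combination (I : finType) (B : {set I}) (alpha : I -> R)
    (p : I -> 'rV[R]_d) c a :
  \sum_(t in B) alpha t = 1 ->
  dot (\sum_(t in B) alpha t *: p t - c) a = \sum_(t in B) alpha t * dot (p t - c) a.
Proof.
move=> sum1; rewrite dotBl dot_suml -[dot c a]mul1r -sum1 mulr_suml -sumrB.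
by apply: eq_bigr => t _; rewrite dotZl dotBl mulrBr.
Qed.

End Dot.

Section RegularSimplex.
Variables (R : realFieldType) (d : nat) (v : 'I_d.+1 -> 'rV[R]_d).
Local Notation c := (simplex_centre v).
Local Notation n := (d.+1%:R : R).

Let n_gt0 : 0 < n. Proof. by rewrite ltr0n. Qed.

Lemma sum_sub_simplex_centre : \sum_h (v h - c) = 0.
Proof.
rewrite sumrB sumr_const card_ord -scaler_nat /simplex_centre scalerA.
by rewrite mulfV ?lt0r_neq0 // scale1r subrr.
Qed.

Lemma sum_sqdist_simplex_centre h :
  \sum_k sqdist (v h) (v k) =
  n * dot (v h - c) (v h - c) + \sum_k dot (v k - c) (v k - c).
Proof.
rewrite (eq_bigr (fun k => dot (v h - c) (v h - c) - 2 * dot (v h - c) (v k - c)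
                           + dot (v k - c) (v k - c))); last first.
  by move=> k _; rewrite sqdistE -dot_sqrB opprB addrA subrK.
rewrite big_split sumrB /= sumr_const card_ord -mulr_sumr -dot_sumr.
by rewrite sum_sub_simplex_centre dot0r mulr0 subr0 mulr_natl.
Qed.

Variable s : R.
Hypothesis hv : forall i j, i != j -> sqdist (v i) (v j) = s.

Lemma simplex_centre_sqnorm h : 2 * n * dot (v h - c) (v h - c) = d%:R * s.
Proof.
set Q := \sum_k dot (v k - c) (v k - c).
have sum_sq k : n * dot (v k - c) (v k - c) + Q = d%:R * s.
  rewrite -sum_sqdist_simplex_centre (bigD1 k) //= sqdistE subrr dot0r add0r.
  rewrite (eq_bigr (fun _ => s)) => [|j jk]; last by rewrite hv // eq_sym.
  by rewrite sumr_const cardC1 card_ord mulr_natl.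
have twoQ : 2 * Q = d%:R * s.
  have : \sum_(k < d.+1) (n * dot (v k - c) (v k - c) + Q) = \sum_(k < d.+1) d%:R * s.
    by apply: eq_bigr => k _; exact: sum_sq.
  rewrite big_split /= -mulr_sumr !sumr_const card_ord -/Q.
  rewrite -(mulr_natl Q) -(mulr_natl (d%:R * s)) => e.
  by apply: (mulfI (lt0r_neq0 n_gt0)) => /=; lra.
by have := sum_sq h; lra.
Qed.

Lemma simplex_centre_dot h k : h != k -> 2 * n * dot (v h - c) (v k - c) = - s.
Proof.
move=> hk; have := congr1 (fun t => n * t) (hv hk).
rewrite /= sqdistE (_ : v h - v k = (v h - c) - (v k - c)); last first.
  by rewrite opprB addrA subrK.
rewrite dot_sqrB.
have := simplex_centre_sqnorm h; have := simplex_centre_sqnorm k.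
rewrite -(natr1 d); lra.
Qed.

Lemma near_vertex_dot_lt0 : 0 < s ->
  exists e : R, 0 < e /\ forall x h h0, h != h0 ->
    sqdist x (v h) <= e ^+ 2 -> dot (x - c) (v h0 - c) < 0.
Proof.
move=> s_gt0; have two_n_gt0 : 0 < 2 * n by rewrite mulr_gt0.
pose rho := d%:R * s / (2 * n).
have rho_ge0 : 0 <= rho by rewrite divr_ge0 ?mulr_ge0 ?ler0n ?ltW.
have rho1_gt0 : 0 < 1 + rho by lra.
(* By AM-GM, <x - v h, a> <= e (1 + rho) / 2 = s / (4 n), where rho = |a|^2;
   this is outweighed by <v h - c, a> = - s / (2 n). *)
pose e := s / (2 * n * (1 + rho)).
have e_gt0 : 0 < e by rewrite divr_gt0 // mulr_gt0.
have e_rho : e * (1 + rho) = s / (2 * n).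
  by rewrite /e invfM mulrA divfK // lt0r_neq0.
exists e; split=> // x h h0 hh0 near; set a := v h0 - c.
have a_sqnorm : dot a a = rho.
  by rewrite /rho -(simplex_centre_sqnorm h0) [RHS]mulrC mulKf // lt0r_neq0.
have : 2 * e * dot (x - v h) a <= e * (e * (1 + rho)).
  by apply: le_trans (dot_AMGM e _ _) _; rewrite a_sqnorm -sqdistE; lra.
rewrite [2 * e]mulrC -mulrA ler_pM2l // e_rho ler_pdivlMr // => near_dot.
have := simplex_centre_dot hh0; rewrite -/a => far_dot.
by rewrite -[x](subrK (v h)) -addrA dotDl -(pmulr_rlt0 _ two_n_gt0); lra.
Qed.

End RegularSimplex.

Lemma affine_part_meets_halfspace (R : realFieldType) (d : nat) (I : finType)
    (p : I -> 'rV[R]_d) (alpha : I -> R) (i0 : I) (B : {set I}) (z c a : 'rV[R]_d) :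
  p i0 = c -> alpha i0 < 0 -> (forall t, t != i0 -> 0 < alpha t) ->
  z = \sum_(t in B) alpha t *: p t -> \sum_(t in B) alpha t = 1 ->
  0 <= dot (z - c) a ->
  exists2 t, t \in B & (t != i0) && (0 <= dot (p t - c) a).
Proof.
move=> p_i0 alpha_i0 alpha_gt0 z_comb alpha_sum1 z_ge0.
apply/exists_inP; apply: contraT => /exists_inPn neg.
have dot_lt0 t : t \in B -> t != i0 -> dot (p t - c) a < 0.
  by move=> tB ti0; have := neg t tB; rewrite ti0 /= -ltNge.
case: (boolP [exists t in B, t != i0]) => [/exists_inP [t0 t0B t0i0] | onlyi0].
- suff : dot (z - c) a < 0 by rewrite ltNge z_ge0.
  rewrite z_comb dot_affine_combination //.
  apply: (sumr_lt0 t0B); first by rewrite pmulr_rlt0 ?alpha_gt0 ?dot_lt0.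
  move=> t tB; have [-> | ti0] := eqVneq t i0; first by rewrite p_i0 subrr dot0l mulr0.
  by rewrite ltW // pmulr_rlt0 ?alpha_gt0 ?dot_lt0.
- suff : \sum_(t in B) alpha t <= 0 by rewrite alpha_sum1 ler10.
  apply: sumr_le0 => t tB; have := exists_inPn onlyi0 t tB.
  by rewrite negbK => /eqP ->; exact: ltW.
Qed.

Unset Implicit Arguments.
Theorem mainTheorem7 (R : realFieldType) (r d : nat) (hr : (2 <= r)%N) (hd : (1 <= d)%N)
  (v : 'I_d.+1 -> 'rV[R]_d) (hreg : regular_simplex v) :
  exists eps0 : R, 0 < eps0 /\
  forall eps : R, 0 < eps -> eps <= eps0 ->
  forall U : 'I_d.+1 -> 'I_r.-1 -> 'rV[R]_d,
    (forall h k, sqdist (U h k) (v h) <= eps ^+ 2) ->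
    alg_indep (Acoords (simplex_centre v) U) ->
    ~ exists (P : {set {set Alabel d r}}) (z : 'rV[R]_d) (alpha : Alabel d r -> R),
        [/\ proper_partition P,
            forall B, B \in P ->
              z = \sum_(t in B) alpha t *: Apoint (simplex_centre v) U t /\
              \sum_(t in B) alpha t = 1,
            alpha None < 0
          & forall h k, 0 < alpha (Some (h, k))].
Proof.
case: hreg => s [s_gt0 hv].
have [eps0 [eps0_gt0 near_lt0]] := near_vertex_dot_lt0 hv s_gt0.
exists eps0; split=> // eps eps_gt0 le_eps U near_U _.
move=> [P [z [alpha [[/and3P [_ triP _] [card_P _]] combP alpha_c alpha_U]]]].
set c := simplex_centre v in combP near_lt0.
have [h0 z_ge0] : exists h0, 0 <= dot (z - c) (v h0 - c).
  by apply: (sumr_eq0_exists_ge0 ord0); rewrite -dot_sumr sum_sub_simplex_centre dot0r.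
have alpha_gt0 t : t != None -> 0 < alpha t by case: t => [[h k]|].
have eps_sq := lerXn2r 2 (ltW eps_gt0) (ltW eps0_gt0) le_eps.
have meet_h0 B : B \in P -> exists k, Some (h0, k) \in B.
  move=> /combP [z_comb sum1].
  have [[[h k]|] // tB /andP [_ t_ge0]] := affine_part_meets_halfspace
    (p := Apoint c U) (i0 := None) erefl alpha_c alpha_gt0 z_comb sum1 z_ge0.
  exists k; have [<- //| hh0] := eqVneq h h0.
  have near := le_trans (near_U h k) eps_sq.
  by move: t_ge0; rewrite /= leNgt (near_lt0 _ _ _ hh0 near).
have := card_trivIset_le (f := fun k => Some (h0, k)) triP meet_h0.
by rewrite card_ord card_P leqNgt ltn_predL (leq_trans _ hr).
Qed.
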